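(* Let $k\ge2$ and $n\ge0$. The map $\phi:\mathcal{T}^k_n\to\overline{\mathcal{Q}}^k_n$ defined below is a well-defined bijection from compartmented trees with $n$ edges onto $k$-quasi-Stirling permutations of size $n$. For a non-root vertex $c$ of $T\in\mathcal{T}^k_n$ whose edge to its parent has label $\ell$, define recursively the word $W(c)=\ell\,U_1\,\ell\,U_2\,\ell\cdots\ell\,U_{k-1}\,\ell$, where $U_j$ is the concatenation of $W(c')$ over the children $c'$ of $c$ in its $j$-th compartment, from left to right (so $\ell$ occurs exactly $k$ times in $W(c)$ outside the $U_j$). Then $\phi(T)$ is the concatenation of $W(c)$ over the children $c$ of the root, from left to right. (Equivalently: label each half-edge at a non-root vertex $v$ with the label of the edge from $v$ to its parent, traverse edges and half-edges by a left-to-right depth-first walk, recording edge labels each time an edge is traversed and half-edge labels once.)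
   Context: For $k\ge2$, a compartmented tree with $n$ edges is a plane (ordered) rooted tree with $n$ edges labeled bijectively by $\{1,\dots,n\}$, in which every vertex other than the root has $k-2$ unlabeled half-edges serving as walls that separate its children into $k-1$ ordered, possibly empty, compartments (the root has no half-edges; its children form a single ordered list). $\mathcal{T}^k_n$ denotes the set of such trees. A $k$-quasi-Stirling permutation of size $n$ is a permutation $\pi$ of the multiset $\{1^k,\dots,n^k\}$ (each of $1,\dots,n$ appearing $k$ times) with no indices $i<j<m<\ell$ such that $\pi_i=\pi_m\neq\pi_j=\pi_\ell$; $\overline{\mathcal{Q}}^k_n$ is their set. *)

From mathcomp Require Import all_boot.
Set Implicit Arguments. Unset Strict Implicit. Unset Printing Implicit Defensive.

(* A (sub)tree hanging below a non-root vertex c: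
   [CNode l cs] where l is the label of the edge from c to its parent and
   cs is the ordered list of compartments of c (each compartment an ordered
   list of child subtrees).  The k-2 walls of c are implicit: they separate
   consecutive compartments, so c must have exactly k-1 compartments. *)
Inductive ctree : Type := CNode : nat -> seq (seq ctree) -> ctree.

Fixpoint ct_wf (k : nat) (t : ctree) : bool :=
  let: CNode _ cs := t in (size cs == k.-1) && all (all (ct_wf k)) cs.

Fixpoint ct_labels (t : ctree) : seq nat :=
  let: CNode l cs := t in l :: flatten (map (fun c => flatten (map ct_labels c)) cs).

(* A compartmented tree is given by the ordered list of root children
   (the root has no walls).  Membership in T^k_n: *)
Definition is_ctree (k n : nat) (F : seq ctree) : Prop :=
  all (ct_wf k) F /\ perm_eq (flatten (map ct_labels F)) (iota 1 n).

Fixpoint W (t : ctree) : seq nat :=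
  let: CNode l cs := t in
  l :: flatten (map (fun c => flatten (map W c) ++ [:: l]) cs).

Definition phi (F : seq ctree) : seq nat := flatten (map W F).

Definition is_qstirling (k n : nat) (w : seq nat) : Prop :=
  perm_eq w (flatten [seq nseq k i | i <- iota 1 n]) /\
  ~ (exists i j m l, [/\ i < j, j < m, m < l & l < size w] /\
       nth 0 w i = nth 0 w m /\ nth 0 w j = nth 0 w l /\ nth 0 w i <> nth 0 w j).

(* The word of a tree is
   W (CNode a cs) = a :: delimit a [seq phi c | c <- cs], where
   delimit a [:: U1; ...; Um] = U1 a U2 a ... Um a.  Such a word avoids x y x y
   iff the concatenated pieces do and no letter y sits on both sides of an a,
   that is, iff the pieces have pairwise disjoint alphabets; for trees this
   holds because the labels are distinct.  Conversely, a quasi-Stirling word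
   a :: s is cut at the remaining k - 1 occurrences of a; the pieces have
   disjoint alphabets, so they are shorter quasi-Stirling words and induction
   on the length rebuilds the forest.  As a occurs in no piece, the cut is
   unique, which gives injectivity. *)

From mathcomp Require Import all_boot zify.
Set Implicit Arguments. Unset Strict Implicit. Unset Printing Implicit Defensive.

Section Words.
Variable T : eqType.
Implicit Types (a x y : T) (s u v w r : seq T) (gs : seq (seq T)).

Definition abab_free w := forall x y, x != y -> ~~ subseq [:: x; y; x; y] w.

Definition disjoint_seq u v := ~~ has [in u] v.

Definition delimit a gs := flatten [seq g ++ [:: a] | g <- gs].

Lemma subseq_cat_split s u v :
  subseq s (u ++ v) -> exists n, subseq (take n s) u /\ subseq (drop n s) v.
Proof.
elim: u s => [|y u IH] s /=; first by exists 0; rewrite take0 drop0.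
case: s => [|x s]; first by exists 0; rewrite !sub0seq.
rewrite [subseq _ _]/=; case: eqP => [<-|_] /IH [n [su sv]].
  by exists n.+1; rewrite /= eqxx.
by exists n; split=> //; apply: subseq_trans su (subseq_cons _ _).
Qed.

Lemma abab_free_subseq u w : subseq u w -> abab_free w -> abab_free u.
Proof.
move=> uw ab x y xy; apply: contra (ab x y xy) => pat.
exact: subseq_trans pat uw.
Qed.

Lemma abab_free_cat u v :
  disjoint_seq u v -> abab_free u -> abab_free v -> abab_free (u ++ v).
Proof.
move=> uv ab_u ab_v x y xy; apply/negP => /subseq_cat_split [n []].
have shared z : z \in u -> z \in v -> False.
  by move=> zu zv; case/negP: uv; apply/hasP; exists z.
case: n => [|[|[|[|n]]]] /= su sv.
- by case/negP: (ab_v x y xy).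
- by apply: (shared x); [rewrite -sub1seq | apply: (mem_subseq sv); rewrite !inE eqxx orbT].
- by apply: (shared x); [apply: (mem_subseq su) | apply: (mem_subseq sv)]; rewrite mem_head.
- by apply: (shared y); [apply: (mem_subseq su); rewrite !inE eqxx orbT | rewrite -sub1seq].
- by case/negP: (ab_u x y xy).
Qed.

Lemma all_disjoint_flatten u gs :
  all (disjoint_seq u) gs = disjoint_seq u (flatten gs).
Proof. by elim: gs => //= g gs ->; rewrite /disjoint_seq has_cat negb_or. Qed.

Lemma uniq_flatten_disjoint gs : uniq (flatten gs) -> pairwise disjoint_seq gs.
Proof.
elim: gs => //= g gs IH; rewrite cat_uniq all_disjoint_flatten.
by case/and3P=> _ dis /IH ->; rewrite andbT.
Qed.

Lemma eq_disjoint_seq u1 u2 v1 v2 :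
  u1 =i u2 -> v1 =i v2 -> disjoint_seq u1 v1 = disjoint_seq u2 v2.
Proof. by move=> eu ev; rewrite /disjoint_seq (eq_has_r ev) (eq_has eu). Qed.

Lemma count_flatten_disjoint gs g x :
  pairwise disjoint_seq gs -> g \in gs -> x \in g ->
  count_mem x (flatten gs) = count_mem x g.
Proof.
elim: gs => //= h gs IH /andP [dis pw]; rewrite all_disjoint_flatten in dis.
rewrite inE count_cat => /predU1P [-> | g_gs] xg.
  suff /count_memPn -> : x \notin flatten gs by rewrite addn0.
  by apply/negP => xgs; case/negP: dis; apply/hasP; exists x.
have xgs : x \in flatten gs by apply/flattenP; exists g.
suff /count_memPn -> : x \notin h by rewrite IH.
by apply/negP => xh; case/negP: dis; apply/hasP; exists x.
Qed.

Lemma subseq_flatten g gs : g \in gs -> subseq g (flatten gs).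
Proof.
elim: gs => //= h gs IH /predU1P [-> | /IH sub]; first exact: prefix_subseq.
exact: subseq_trans sub (suffix_subseq _ _).
Qed.

Lemma filter_predC1_id a s : a \notin s -> filter (predC1 a) s = s.
Proof. by move=> a_s; apply/all_filterP/allP => y ys; apply: contraNneq a_s => <-. Qed.

Lemma cat_cons_notin a u1 u2 v1 v2 : a \notin u1 -> a \notin u2 ->
  u1 ++ a :: v1 = u2 ++ a :: v2 -> u1 = u2 /\ v1 = v2.
Proof.
move=> a_u1 a_u2 e; have size_u : size u1 = size u2.
  by move: (congr1 (index a) e); rewrite !index_cat (negbTE a_u1) (negbTE a_u2) /= eqxx !addn0.
by move/eqP: e; rewrite eqseq_cat // => /andP [/eqP -> /eqP [->]].
Qed.

Lemma delimit_cons a g gs : delimit a (g :: gs) = g ++ a :: delimit a gs.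
Proof. by rewrite /delimit /= -catA. Qed.

Lemma count_delimit p a gs :
  count p (delimit a gs) = count p (flatten gs) + size gs * p a.
Proof.
elim: gs => [|g gs IH] //; rewrite delimit_cons /= !count_cat /= IH mulSn; lia.
Qed.

Lemma filter_delimit a gs :
  filter (predC1 a) (delimit a gs) = filter (predC1 a) (flatten gs).
Proof. by elim: gs => [|g gs IH] //; rewrite delimit_cons !filter_cat /= eqxx IH. Qed.

Lemma mem_delimit a gs x : x != a -> (x \in delimit a gs) = (x \in flatten gs).
Proof.
by move=> xa; have := congr1 (fun s => x \in s) (filter_delimit a gs); rewrite /= !mem_filter /= xa.
Qed.

Lemma delimit_decomposition a s :
  exists gs r, a \notin flatten gs ++ r /\ s = delimit a gs ++ r.
Proof.
elim: s => [|y s [gs [r [a_free ->]]]]; first by exists [::], [::].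
have [->|ya] := eqVneq y a; first by exists ([::] :: gs), r; rewrite delimit_cons.
case: gs a_free => [|g gs] a_free.
  by exists [::], (y :: r); rewrite /= inE negb_or eq_sym ya.
by exists ((y :: g) :: gs), r; rewrite !delimit_cons /= inE negb_or eq_sym ya.
Qed.

Lemma delimit_inj a gs1 gs2 r1 r2 :
  a \notin flatten gs1 ++ r1 -> a \notin flatten gs2 ++ r2 ->
  delimit a gs1 ++ r1 = delimit a gs2 ++ r2 -> gs1 = gs2 /\ r1 = r2.
Proof.
elim: gs1 gs2 => [|g1 gs1 IH] [|g2 gs2] /=; rewrite ?delimit_cons -?catA //=.
- by move=> a_r1 _ e; rewrite e mem_cat inE eqxx orbT in a_r1.
- by move=> _ a_r2 e; rewrite -e mem_cat inE eqxx orbT in a_r2.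
rewrite mem_cat negb_or => /andP [a_g1 a_rest1].
rewrite mem_cat negb_or => /andP [a_g2 a_rest2].
by case/cat_cons_notin => // <- /IH [] // -> ->.
Qed.

Lemma subseq_cons_cat a s g v :
  a \notin g -> subseq (a :: s) (g ++ a :: v) = subseq s v.
Proof.
elim: g => [|z g IH] /=; first by rewrite eqxx.
by rewrite inE negb_or => /andP [/negbTE -> /IH].
Qed.

Lemma subseq_straddle_cat a y g v : y != a -> a \notin g ->
  subseq [:: y; a; y] (g ++ a :: v) = (y \in g) && (y \in v) || subseq [:: y; a; y] v.
Proof.
move=> ya; elim: g => [|z g IH] /=; first by rewrite (negbTE ya).
rewrite !inE negb_or => /andP [az ag].
have [_|yz] := eqVneq y z; last by rewrite IH.
rewrite subseq_cons_cat // sub1seq /= orb_idr // => /mem_subseq; apply.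
by rewrite mem_head.
Qed.

Lemma delimit_disjointP a gs r : a \notin flatten gs ++ r ->
  (forall y, y != a -> ~~ subseq [:: y; a; y] (delimit a gs ++ r)) <->
  pairwise disjoint_seq (rcons gs r).
Proof.
elim: gs => [|g gs IH] /= a_free.
  split=> // _ y _; apply: contra a_free => /mem_subseq; apply.
  by rewrite !inE eqxx orbT.
rewrite -catA mem_cat negb_or in a_free; case/andP: a_free => a_g a_rest.
have key y : y != a -> subseq [:: y; a; y] (delimit a (g :: gs) ++ r) =
    (y \in g) && (y \in flatten gs ++ r) || subseq [:: y; a; y] (delimit a gs ++ r).
  by move=> ya; rewrite delimit_cons -catA subseq_straddle_cat // !mem_cat mem_delimit.
have g_new y : y \in g -> y != a by move=> yg; apply: contraNneq a_g => <-.
rewrite all_disjoint_flatten flatten_rcons; split.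
  move=> no_straddle; apply/andP; split; last first.
    by apply/(IH a_rest) => y ya; move: (no_straddle y ya); rewrite key // negb_or => /andP [].
  apply/hasPn => y y_rest; apply/negP => yg.
  by move: (no_straddle y (g_new y yg)); rewrite key ?g_new // yg y_rest.
case/andP=> dis /(IH a_rest) no_straddle y ya; rewrite key // negb_or no_straddle // andbT.
by apply/negP => /andP [yg y_rest]; case/negP: dis; apply/hasP; exists y.
Qed.

Lemma abab_free_delimit a gs : a \notin flatten gs -> pairwise disjoint_seq gs ->
  abab_free (flatten gs) -> abab_free (a :: delimit a gs).
Proof.
move=> a_free pw ab x y xy; apply/negP => pat.
have no_straddle z : z != a -> ~~ subseq [:: z; a; z] (delimit a gs).
  have a_free0 : a \notin flatten gs ++ [::] by rewrite cats0.
  rewrite -[delimit a gs]cats0; apply: (delimit_disjointP a_free0).2.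
  by rewrite pairwise_rcons pw andbT; apply/allP.
have [xa|xa] := eqVneq x a.
  by move: pat; rewrite xa /= eqxx; apply/negP/no_straddle; rewrite eq_sym -xa.
have [ya|ya] := eqVneq y a.
  move: pat; rewrite ya /= (negbTE xa) => pat; case/negP: (no_straddle x xa).
  exact: subseq_trans (prefix_subseq [:: x; a; x] [:: a]) pat.
have : subseq [:: x; y; x; y] (filter (predC1 a) (a :: delimit a gs)).
  by rewrite subseq_filter pat /= xa ya.
by rewrite /= eqxx /= filter_delimit filter_predC1_id //; apply/negP/ab.
Qed.

Lemma filter_delimit_cat a gs r : a \notin flatten gs ++ r ->
  filter (predC1 a) (delimit a gs ++ r) = flatten (rcons gs r).
Proof.
by move=> a_free; rewrite filter_cat filter_delimit -filter_cat flatten_rcons filter_predC1_id.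
Qed.

Lemma subseq_delimit_piece a gs r p : a \notin flatten gs ++ r ->
  p \in rcons gs r -> subseq p (delimit a gs ++ r).
Proof.
move=> a_free /subseq_flatten sub; apply: subseq_trans sub _.
by rewrite -(filter_delimit_cat a_free) filter_subseq.
Qed.

Lemma count_delimit_sep a gs r : a \notin flatten gs ++ r ->
  count_mem a (delimit a gs ++ r) = size gs.
Proof. by move=> /count_memPn; rewrite !count_cat count_delimit /= eqxx muln1; lia. Qed.

Lemma count_delimit_piece a gs r p x : a \notin flatten gs ++ r ->
  pairwise disjoint_seq (rcons gs r) -> p \in rcons gs r -> x \in p ->
  count_mem x (a :: delimit a gs ++ r) = count_mem x p.
Proof.
move=> a_free pw p_in xp; have xa : x != a.
  by apply: contraNneq a_free => <-; rewrite -flatten_rcons; apply/flattenP; exists p.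
rewrite -(count_flatten_disjoint pw p_in xp) -(filter_delimit_cat a_free) count_filter /=.
rewrite eq_sym (negbTE xa) add0n; apply: eq_count => z /=.
by have [->|] := eqVneq z x; rewrite ?xa.
Qed.

Lemma subseq_drop_cons x0 x s w n : subseq (x :: s) (drop n w) <->
  exists i, [/\ n <= i < size w, nth x0 w i = x & subseq s (drop i.+1 w)].
Proof.
split; last first.
  case=> i [/andP [ni iw] <- sub]; rewrite -(cat_take_drop (i - n) (drop n w)).
  rewrite drop_drop subnK // (drop_nth x0 iw); apply: subseq_trans (suffix_subseq _ _).
  by rewrite /= eqxx.
elim: w n => [|y w IH] [|n] //=.
  case: eqP => [<- sub|_ sub]; first by exists 0; rewrite drop0.
  by move: (IH 0); rewrite drop0 => /(_ sub) [i [/andP [_ iw] ei sub']]; exists i.+1.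
by case/IH=> i [/andP [ni iw] ei sub]; exists i.+1; split; rewrite ?ltnS ?ni.
Qed.

Lemma abab_free_nthP x0 w : abab_free w <->
  ~ (exists i j m l, [/\ i < j, j < m, m < l & l < size w] /\
       nth x0 w i = nth x0 w m /\ nth x0 w j = nth x0 w l /\ nth x0 w i <> nth x0 w j).
Proof.
split=> [ab [i [j [m [l [[ij jm ml lw] [e_im [e_jl ne]]]]]]] | no_pat x y xy].
  case/negP: (ab _ _ (introN eqP ne)); rewrite -[w in subseq _ w]drop0.
  apply/(subseq_drop_cons x0); exists i; split=> //; first lia.
  apply/(subseq_drop_cons x0); exists j; split=> //; first lia.
  apply/(subseq_drop_cons x0); exists m; split; [lia | by rewrite e_im |].
  apply/(subseq_drop_cons x0); exists l; split; [lia | by rewrite e_jl | exact: sub0seq].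
apply/negP; rewrite -[w in subseq _ w]drop0.
case/(subseq_drop_cons x0) => i [/andP [_ iw] ei].
case/(subseq_drop_cons x0) => j [/andP [ij _] ej].
case/(subseq_drop_cons x0) => m [/andP [jm _] em].
case/(subseq_drop_cons x0) => l [/andP [ml lw] el _].
by apply: no_pat; exists i, j, m, l; rewrite ei ej em el; do !split=> //; apply/eqP.
Qed.

Lemma count_flatten_nseq k (p : pred T) s :
  count p (flatten [seq nseq k x | x <- s]) = k * count p s.
Proof.
elim: s => [|x s IH] /=; first by rewrite muln0.
by rewrite count_cat IH count_nseq mulnDr mulnC.
Qed.

Lemma count_perm_flatten_nseq k s w : uniq s ->
  perm_eq w (flatten [seq nseq k y | y <- s]) -> {in w, forall x, count_mem x w = k}.
Proof.
move=> us /permP perm_w x; rewrite -has_pred1 has_count !perm_w count_flatten_nseq.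
by rewrite count_uniq_mem //; case: (x \in s); rewrite ?muln1 ?muln0.
Qed.

End Words.

Arguments disjoint_seq {T} u v.

Definition flabels (F : seq ctree) : seq nat := flatten (map ct_labels F).

Lemma W_node l cs : W (CNode l cs) = l :: delimit l (map phi cs).
Proof. by rewrite /delimit -map_comp. Qed.

Lemma ct_labels_node l cs : ct_labels (CNode l cs) = l :: flatten (map flabels cs).
Proof. by []. Qed.

Lemma phi_cons t F : phi (t :: F) = W t ++ phi F.
Proof. by []. Qed.

Lemma flabels_cons t F : flabels (t :: F) = ct_labels t ++ flabels F.
Proof. by []. Qed.

(* [ctree] is a nested inductive type, for which Rocq generates no useful
   induction principle; this is the mutual principle over trees, forests and
   lists of compartments. *)
Section NestedInduction.
Variables (P : ctree -> Prop) (Q : seq ctree -> Prop) (R : seq (seq ctree) -> Prop).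
Hypotheses (P_node : forall l cs, R cs -> P (CNode l cs)).
Hypotheses (Q_nil : Q [::]) (Q_cons : forall t F, P t -> Q F -> Q (t :: F)).
Hypotheses (R_nil : R [::]) (R_cons : forall F cs, Q F -> R cs -> R (F :: cs)).

Fixpoint ctree_nested_ind t : P t :=
  let: CNode l cs := t in
  P_node l ((fix compartments cs : R cs :=
    if cs is F :: cs' then
      R_cons ((fix forest F : Q F :=
        if F is t' :: F' then Q_cons (ctree_nested_ind t') (forest F') else Q_nil) F)
        (compartments cs')
    else R_nil) cs).

Lemma forest_nested_ind F : Q F.
Proof. by elim: F => // t F; apply: Q_cons (ctree_nested_ind t). Qed.

End NestedInduction.

Lemma mem_phi F : phi F =i flabels F.
Proof.
move: F; apply: (forest_nested_ind (P := fun t => W t =i ct_labels t)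
  (R := fun cs => flatten (map phi cs) =i flatten (map flabels cs))) => //.
- move=> l cs IH x; rewrite W_node ct_labels_node !inE.
  by have [//|xl] := eqVneq x l; rewrite mem_delimit // IH.
- by move=> t F IHt IHF x; rewrite phi_cons flabels_cons !mem_cat IHt IHF.
- by move=> F cs IHF IHcs x; rewrite /= !mem_cat IHF IHcs.
Qed.

Lemma mem_W t : W t =i ct_labels t.
Proof. by move=> x; have := mem_phi [:: t] x; rewrite phi_cons flabels_cons !cats0. Qed.

Lemma mem_flatten_phi cs : flatten (map phi cs) =i flatten (map flabels cs).
Proof. by elim: cs => //= F cs IH x; rewrite !mem_cat mem_phi IH. Qed.

Lemma count_phi k p F : 0 < k -> all (ct_wf k) F ->
  count p (phi F) = k * count p (flabels F).
Proof.
move=> k_gt0; move: F; apply: (forest_nested_ind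
  (P := fun t => ct_wf k t -> count p (W t) = k * count p (ct_labels t))
  (R := fun cs => all (all (ct_wf k)) cs ->
          count p (flatten (map phi cs)) = k * count p (flatten (map flabels cs)))).
- move=> l cs IH /andP [/eqP size_cs /IH {}IH].
  rewrite W_node ct_labels_node /= count_delimit IH size_map size_cs.
  by case: k k_gt0 {size_cs IH} => // k _; rewrite /= mulnDr mulSn; lia.
- by rewrite muln0.
- move=> t F IHt IHF /andP [wt wF].
  by rewrite phi_cons flabels_cons !count_cat IHt // IHF // mulnDr.
- by rewrite muln0.
- move=> F cs IHF IHcs /andP [wF wcs].
  by rewrite /= !count_cat IHF // IHcs // mulnDr.
Qed.

Lemma abab_free_phi F : uniq (flabels F) -> abab_free (phi F).
Proof.
move: F; apply: (forest_nested_ind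
  (P := fun t => uniq (ct_labels t) -> abab_free (W t))
  (R := fun cs => uniq (flatten (map flabels cs)) -> abab_free (flatten (map phi cs)))).
- move=> l cs IH; rewrite W_node ct_labels_node /= => /andP [l_new u].
  apply: abab_free_delimit; [by rewrite mem_flatten_phi | | exact: IH].
  rewrite pairwise_map; apply: (sub_pairwise (r := relpre flabels disjoint_seq)).
    by move=> F1 F2 /=; rewrite (eq_disjoint_seq (mem_phi F1) (mem_phi F2)).
  by rewrite -pairwise_map; apply: uniq_flatten_disjoint.
- by move=> _ x y.
- move=> t F IHt IHF; rewrite flabels_cons cat_uniq phi_cons => /and3P [ut dis uF].
  by apply: abab_free_cat (IHt ut) (IHF uF); rewrite (eq_disjoint_seq (mem_W t) (mem_phi F)).
- by move=> _ x y.
- move=> F cs IHF IHcs; rewrite /= cat_uniq => /and3P [uF dis ucs].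
  apply: abab_free_cat (IHF uF) (IHcs ucs).
  by rewrite (eq_disjoint_seq (mem_phi F) (mem_flatten_phi cs)).
Qed.

Lemma phi_inj F1 F2 : uniq (flabels F1) -> uniq (flabels F2) -> phi F1 = phi F2 -> F1 = F2.
Proof.
move: F1 F2; apply: (forest_nested_ind
  (P := fun t1 => forall t2 F1 F2, uniq (flabels (t1 :: F1)) -> uniq (flabels (t2 :: F2)) ->
          phi (t1 :: F1) = phi (t2 :: F2) -> t1 = t2 /\ phi F1 = phi F2)
  (R := fun cs1 => forall cs2, uniq (flatten (map flabels cs1)) ->
          uniq (flatten (map flabels cs2)) -> map phi cs1 = map phi cs2 -> cs1 = cs2)).
- move=> a cs1 IH [b cs2] F1 F2; rewrite !flabels_cons !ct_labels_node !phi_cons !W_node /=.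
  case/andP=> a_new1 u1 /andP [a_new2 u2] [eab e]; rewrite -eab in e a_new2 *.
  have a_free1 : a \notin flatten (map phi cs1) ++ phi F1.
    by rewrite mem_cat mem_flatten_phi mem_phi -mem_cat.
  have a_free2 : a \notin flatten (map phi cs2) ++ phi F2.
    by rewrite mem_cat mem_flatten_phi mem_phi -mem_cat.
  have [e_cs e_F] := delimit_inj a_free1 a_free2 e.
  move: u1 u2; rewrite !cat_uniq => /and3P [ucs1 _ _] /and3P [ucs2 _ _].
  by rewrite (IH cs2 ucs1 ucs2 e_cs).
- by move=> [|[l cs] F2] // _ _; rewrite phi_cons W_node.
- move=> t1 F1 IHt IHF [|t2 F2] u1 u2 e.
    by case: t1 e {IHt u1} => l cs; rewrite phi_cons W_node.
  have [-> e_F] := IHt t2 F1 F2 u1 u2 e.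
  move: u1 u2; rewrite !flabels_cons !cat_uniq => /and3P [_ _ uF1] /and3P [_ _ uF2].
  by rewrite (IHF F2 uF1 uF2 e_F).
- by case.
- move=> F1 cs1 IHF IHcs [|F2 cs2] //= u1 u2 [e_F e_cs].
  move: u1 u2; rewrite !cat_uniq => /and3P [uF1 _ ucs1] /and3P [uF2 _ ucs2].
  by rewrite (IHF F2 uF1 uF2 e_F) (IHcs cs2 ucs1 ucs2 e_cs).
Qed.

Lemma exists_preimage_seq (A : Type) (B : eqType) (P : pred A) (f : A -> B) s :
  {in s, forall y, exists2 x, P x & f x = y} -> exists2 xs, all P xs & map f xs = s.
Proof.
elim: s => [|y s IH] preim; first by exists [::].
have [x Px <-] := preim y (mem_head y s).
have [xs Pxs <-] := IH (fun z zs => preim z (mem_behead (s := y :: s) zs)).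
by exists (x :: xs); rewrite /= ?Px.
Qed.

Lemma phi_surj k w : abab_free w -> {in w, forall x, count_mem x w = k} ->
  exists2 F, all (ct_wf k) F & phi F = w.
Proof.
have [N] := ubnP (size w); elim: N w => // N IH [|a s] size_w ab_w count_w.
  by exists [::].
have [gs [r [a_free s_eq]]] := delimit_decomposition a s.
have pw : pairwise disjoint_seq (rcons gs r).
  apply/(delimit_disjointP a_free) => y ya; rewrite -s_eq.
  by move: (ab_w a y); rewrite /= eqxx eq_sym; apply.
have size_gs : size gs = k.-1.
  by rewrite -(count_w a (mem_head a s)) /= eqxx s_eq count_delimit_sep.
have pieces p : p \in rcons gs r -> exists2 F, all (ct_wf k) F & phi F = p.
  move=> p_in; have sub_p := subseq_delimit_piece a_free p_in; rewrite -s_eq in sub_p.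
  apply: IH.
  - exact: leq_ltn_trans (size_subseq sub_p) size_w.
  - exact: abab_free_subseq (subseq_trans sub_p (subseq_cons s a)) ab_w.
  - move=> x xp; rewrite -(count_delimit_piece a_free pw p_in xp) -s_eq count_w //.
    by rewrite inE (mem_subseq sub_p) ?orbT.
have [cs wf_cs phi_cs] : exists2 cs, all (all (ct_wf k)) cs & map phi cs = gs.
  by apply: exists_preimage_seq => g g_in; apply: pieces; rewrite mem_rcons inE g_in orbT.
have [F wf_F phi_F] : exists2 F, all (ct_wf k) F & phi F = r.
  by apply: pieces; rewrite mem_rcons mem_head.
exists (CNode a cs :: F); first by rewrite /= -size_gs -phi_cs size_map eqxx wf_cs.
by rewrite phi_cons W_node phi_cs phi_F s_eq.
Qed.

Theorem theorem4p2 (k n : nat) (hk : 2 <= k) :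
  (forall F, is_ctree k n F -> is_qstirling k n (phi F)) /\
  (forall F1 F2, is_ctree k n F1 -> is_ctree k n F2 -> phi F1 = phi F2 -> F1 = F2) /\
  (forall w, is_qstirling k n w -> exists F, is_ctree k n F /\ phi F = w).
Proof.
have k_gt0 : 0 < k by apply: ltnW.
have uniq_labels F : is_ctree k n F -> uniq (flabels F).
  by case=> _ /perm_uniq ->; apply: iota_uniq.
split; [|split].
- move=> F [wf_F perm_F]; split; last exact/abab_free_nthP/abab_free_phi/uniq_labels.
  apply/permP => p; rewrite (count_phi _ k_gt0 wf_F) count_flatten_nseq.
  by rewrite (permP perm_F).
- by move=> F1 F2 /uniq_labels u1 /uniq_labels u2; apply: phi_inj.
move=> w [perm_w /abab_free_nthP ab_w].
have [F wf_F phi_F] := phi_surj ab_w (count_perm_flatten_nseq (iota_uniq 1 n) perm_w).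
exists F; split=> //; split=> //.
apply/permP => p; apply/eqP; rewrite -(eqn_pmul2l k_gt0) -(count_phi _ k_gt0 wf_F) phi_F.
by rewrite -count_flatten_nseq (permP perm_w).
Qed.
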